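(* Let $f,g\in\mathcal{S}(\Omega)$. If $x\in\Omega$ is real and $x\in V(f)\cup V(g)$, then $x\in V(f\cdot g)$. Now let $x\in\Omega\setminus\mathbb{R}$. (1) If $\mathbb{S}_x\subseteq V(f)$ or $\mathbb{S}_x\subseteq V(g)$, then $\mathbb{S}_x\subseteq V(f\cdot g)$. (2) If $\mathbb{S}_x\cap V(f)$ contains a point $y$, then $(f\cdot g)'_s(x)=f'_s(x)g^\circ_s(x)-(\mathrm{im}(y)f'_s(x))g'_s(x)$, and: (a) if $f'_s(x)$ is invertible and $(f\cdot g)'_s(x)=0$, then $\mathbb{S}_x\subseteq V(f\cdot g)$; (b) if $(f\cdot g)'_s(x)$ is invertible, then $\mathbb{S}_x\cap V(f\cdot g)\subseteq\{w\}$ with \[w=\big((yf'_s(x))g^\circ_s(x)-(y\,\mathrm{im}(y)f'_s(x))g'_s(x)\big)\big((f\cdot g)'_s(x)\big)^{-1}.\] (3) If $\mathbb{S}_x\cap V(g)$ contains a point $z$, then $(f\cdot g)'_s(x)=f^\circ_s(x)g'_s(x)-f'_s(x)(\mathrm{im}(z)g'_s(x))$, and: (a) if $g'_s(x)$ is invertible and $(f\cdot g)'_s(x)=0$, then $\mathbb{S}_x\subseteq V(f\cdot g)$; (b) if $(f\cdot g)'_s(x)$ is invertible, then $\mathbb{S}_x\cap V(f\cdot g)\subseteq\{w\}$ with \[w=\big(f^\circ_s(x)(zg'_s(x))-f'_s(x)(z\,\mathrm{im}(z)g'_s(x))\big)\big((f\cdot g)'_s(x)\big)^{-1}.\] (4)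 If, for some $y,z\in\mathbb{S}_x$, $y\in V(f)$ and $z\in V(g)$, then $(f\cdot g)'_s(x)=(y^cf'_s(x))g'_s(x)-f'_s(x)(zg'_s(x))$, and: (a) if $f'_s(x)$ or $g'_s(x)$ is invertible and $(f\cdot g)'_s(x)=0$, then $\mathbb{S}_x\subseteq V(f\cdot g)$; (b) if $(f\cdot g)'_s(x)$ is invertible, then $\mathbb{S}_x\cap V(f\cdot g)\subseteq\{w\}$ with \[w=\big(n(x)f'_s(x)g'_s(x)-(yf'_s(x))(zg'_s(x))\big)\big((f\cdot g)'_s(x)\big)^{-1}.\]
   Context: Let $A$ be a finite-dimensional real algebra with unit $1$ ($\mathbb{R}$ identified with $\mathbb{R}1$) which is alternative (the associator $(x,y,z)=(xy)z-x(yz)$ is alternating), with a $^*$-involution $x\mapsto x^c$ (real linear, $(x^c)^c=x$, $(xy)^c=y^cx^c$, $r^c=r$ for $r\in\mathbb{R}$). Let $t(x)=x+x^c$, $n(x)=xx^c$, $\mathbb{S}_A=\{J\in A:t(J)=0,n(J)=1\}$ (assumed non-empty), $Q_A=\mathbb{R}\cup\{x:t(x),n(x)\in\mathbb{R},4n(x)>t(x)^2\}$; every $x\in Q_A$ is $\alpha+\beta J$ with $\alpha,\beta\in\mathbb{R}$, $J\in\mathbb{S}_A$; $x^c=\alpha-\beta J$, $\mathrm{re}(x)=t(x)/2$, $\mathrm{im}(x)=x-\mathrm{re}(x)$, $\mathbb{S}_x=\{\alpha+\beta I:I\in\mathbb{S}_A\}$. Let $D\subseteq\mathbb{C}$ be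 non-empty, invariant under conjugation, $\Omega=\{\alpha+\beta J:\alpha+i\beta\in D,J\in\mathbb{S}_A\}$. $A_{\mathbb{C}}=\{a+\imath b\}$ with $(a+\imath b)(a'+\imath b')=aa'-bb'+\imath(ab'+ba')$, $\overline{a+\imath b}=a-\imath b$. A stem function $F=F_1+\imath F_2:D\to A_{\mathbb{C}}$ satisfies $F(\bar z)=\overline{F(z)}$ and induces the slice function $f=\mathcal{I}(F)$, $f(\alpha+\beta J)=F_1(\alpha+i\beta)+JF_2(\alpha+i\beta)$; $\mathcal{S}(\Omega)$ is the set of slice functions; slice product $f\cdot g=\mathcal{I}(FG)$. $V(h)=\{x:h(x)=0\}$. $f^\circ_s(x)=\frac12(f(x)+f(x^c))$ and $f'_s(x)=\frac12\mathrm{im}(x)^{-1}(f(x)-f(x^c))$ for $x\in\Omega\setminus\mathbb{R}$. *)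

From HB Require Import structures.
From mathcomp Require Import all_boot all_order all_algebra.
From mathcomp Require Import boolp classical_sets reals.
Set Implicit Arguments. Unset Strict Implicit. Unset Printing Implicit Defensive.
Import Order.TTheory GRing.Theory Num.Theory.
Local Open Scope ring_scope.
Local Open Scope classical_set_scope.

(* A finite-dimensional real vector space A (vectType R, R : realType) carrying
   a (possibly non-associative) bilinear product, a unit and a *-involution. *)
Record alg_data (R : realType) (A : vectType R) := AlgData {
  amul : A -> A -> A;
  aone : A;
  aconj : A -> A }.

Section Defs.
Variables (R : realType) (A : vectType R) (d : alg_data A).
Local Notation "x ** y" := (amul d x y) (at level 40, left associativity).
Local Notation "1a" := (aone d).
Local Notation "x ^c" := (aconj d x).

Definition assoc (x y z : A) : A := (x ** y) ** z - x ** (y ** z).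

Definition is_alt_star_alg : Prop :=
  (forall (a : R) (x y z : A), (a *: x + y) ** z = a *: (x ** z) + y ** z) /\
      (forall (a : R) (x y z : A), z ** (a *: x + y) = a *: (z ** x) + z ** y) /\
      (forall x : A, 1a ** x = x /\ x ** 1a = x) /\
      1a != 0 /\
      (forall x y : A, assoc x x y = 0 /\ assoc x y x = 0 /\ assoc y x x = 0) /\
      (forall (a : R) (x y : A), (a *: x + y)^c = a *: x^c + y^c) /\
      (forall x : A, (x^c)^c = x) /\
      (forall x y : A, (x ** y)^c = y^c ** x^c) /\
      (forall r : R, (r *: 1a)^c = r *: 1a).

Definition is_real (x : A) : Prop := exists r : R, x = r *: 1a.

Definition trace (x : A) : A := x + x^c.
Definition anorm (x : A) : A := x ** x^c.

Definition imag_units : set A := [set J | trace J = 0 /\ anorm J = 1a].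

Definition re (x : A) : A := 2^-1 *: trace x.
Definition im (x : A) : A := x - re x.

(* two-sided invertibility and the inverse (chosen; unique in an alternative algebra) *)
Definition invertible (a : A) : Prop := exists b : A, a ** b = 1a /\ b ** a = 1a.
Definition ainv (a : A) : A := xget 0 [set b | a ** b = 1a /\ b ** a = 1a].

(* D is a subset of C, encoded as R * R (alpha + i beta |-> (alpha, beta)). *)
Definition circ_set (D : set (R * R)) : set A :=
  [set x | exists (al be : R) (J : A), D (al, be) /\ imag_units J /\ x = al *: 1a + be *: J].

Definition sphere (x : A) : set A :=
  [set y | exists (al be : R) (J I : A), imag_units J /\ imag_units I /\
           x = al *: 1a + be *: J /\ y = al *: 1a + be *: I].

Definition zeros (Om : set A) (h : A -> A) : set A := [set u | Om u /\ h u = 0].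

(* stem function F = F1 + i F2 on D: F(conj z) = conj (F z) *)
Definition stem (D : set (R * R)) (F1 F2 : R -> R -> A) : Prop :=
  forall al be : R, D (al, be) -> F1 al (- be) = F1 al be /\ F2 al (- be) = - F2 al be.

Definition induced (D : set (R * R)) (F1 F2 : R -> R -> A) (f : A -> A) : Prop :=
  forall (al be : R) (J : A), D (al, be) -> imag_units J ->
    f (al *: 1a + be *: J) = F1 al be + J ** F2 al be.

(* product of stem functions in A_C: (F1 + i F2)(G1 + i G2) *)
Definition stem_prod1 (F1 F2 G1 G2 : R -> R -> A) : R -> R -> A :=
  fun al be => F1 al be ** G1 al be - F2 al be ** G2 al be.
Definition stem_prod2 (F1 F2 G1 G2 : R -> R -> A) : R -> R -> A :=
  fun al be => F1 al be ** G2 al be + F2 al be ** G1 al be.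

Definition sph_val (f : A -> A) (x : A) : A := 2^-1 *: (f x + f x^c).
Definition sph_der (f : A -> A) (x : A) : A :=
  2^-1 *: (ainv (im x) ** (f x - f x^c)).

End Defs.

(* At a non-real x = al + be J, a slice function h induced by H1 + i H2 has
   h(al + be K) = H1 + K H2, spherical value H1 and spherical derivative
   be^-1 H2; with a, b, c, e the stem values of f and g, the product takes the
   values (ac - be) + K (ae + bc) on S_x.  A zero al + be I of f (of g) means
   a = -Ib (c = -Ie), and the derivative formulas are bilinear expansions.
   The vanishing statements rest on the fact that, for invertible b and
   I^2 = -1, bc = (Ib)e forces (Ib)c = -(be): this follows from the Moufang
   identities and the inverse property of alternative algebras.  Finally a
   zero w of h on S_x satisfies w h'_s(x) = re(x) h'_s(x) - h^o_s(x), which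
   determines w when h'_s(x) is invertible. *)

From HB Require Import structures.
From mathcomp Require Import all_boot all_order all_algebra ring.
From mathcomp Require Import boolp classical_sets reals.
Set Implicit Arguments. Unset Strict Implicit. Unset Printing Implicit Defensive.
Import Order.TTheory GRing.Theory Num.Theory.
Local Open Scope ring_scope.
Local Open Scope classical_set_scope.

Lemma coord_vbasis_inj (F : fieldType) (V : vectType F) (x y : V) :
  (forall i, coord (vbasis fullv) i x = coord (vbasis fullv) i y) -> x = y.
Proof.
move=> E; rewrite (coord_vbasis (memvf x)) (coord_vbasis (memvf y)).
by apply: eq_bigr => i _; rewrite E.
Qed.

(* Identities between R-linear combinations of vectors, products being atoms,
   are checked coordinatewise by [ring]. *)
Ltac lin_ring :=
  apply: coord_vbasis_inj => ?; rewrite ?(linearD, linearN, linearZ, linear0) /=;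
  (ring || (field; done)).

Lemma double_inj (F : numFieldType) (V : lmodType F) (u v : V) : u + u = v + v -> u = v.
Proof. by rewrite -!mulr2n -!scaler_nat => /scalerI; apply; rewrite pnatr_eq0. Qed.

Lemma idempotents_sum2_id (F : numFieldType) (V : lmodType F) (P Q : V -> V) :
  (forall u v, P (u + v) = P u + P v) ->
  (forall u, P (P u) = P u) -> (forall u, Q (Q u) = Q u) ->
  (forall u, P u + Q u = u + u) -> forall u, P u = u.
Proof.
move=> PD PP QQ PQ u.
have PQu : P (Q u) = Q u by have := PQ (Q u); rewrite QQ => /addIr.
have QuE : Q u = P u.
  by apply/(addrI (P u)); rewrite -[P u in LHS]PP -PQu -PD (PQ u) PD.
by apply: double_inj; rewrite -(PQ u) QuE.
Qed.

Section Alternative.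
Variables (R : realType) (A : vectType R).

Definition alternative (d : alg_data A) : Prop :=
  [/\ forall (a : R) (x y z : A), amul d (a *: x + y) z = a *: amul d x z + amul d y z,
      forall (a : R) (x y z : A), amul d z (a *: x + y) = a *: amul d z x + amul d z y,
      forall x y : A, assoc d x x y = 0
    & forall x y : A, assoc d y x x = 0].

Definition unital (d : alg_data A) : Prop :=
  forall x : A, amul d (aone d) x = x /\ amul d x (aone d) = x.

Definition opp_alg (d : alg_data A) : alg_data A :=
  AlgData (fun x y => amul d y x) (aone d) (aconj d).

Variable d : alg_data A.
Local Notation "x ** y" := (amul d x y) (at level 40, left associativity).
Local Notation "1a" := (aone d).

Lemma alternative_opp : alternative d -> alternative (opp_alg d).
Proof.
case=> mZDl mZDr altl altr; split=> //= x y.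
  by rewrite -[RHS]oppr0 -(altr x y) /assoc /= opprB.
by rewrite -[RHS]oppr0 -(altl x y) /assoc /= opprB.
Qed.

Lemma unital_opp : unital d -> unital (opp_alg d).
Proof. by move=> u1 x; have [] := u1 x. Qed.

Hypothesis Halt : alternative d.

Lemma amulDl x y z : (x + y) ** z = x ** z + y ** z.
Proof. by case: Halt => mZDl _ _ _; rewrite -[x in LHS]scale1r mZDl scale1r. Qed.
Lemma amulDr x y z : z ** (x + y) = z ** x + z ** y.
Proof. by case: Halt => _ mZDr _ _; rewrite -[x in LHS]scale1r mZDr scale1r. Qed.
Lemma amul0l z : 0 ** z = 0.
Proof. by apply: (addrI (0 ** z)); rewrite -amulDl !addr0. Qed.
Lemma amul0r z : z ** 0 = 0.
Proof. by apply: (addrI (z ** 0)); rewrite -amulDr !addr0. Qed.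
Lemma amulZl a x z : (a *: x) ** z = a *: (x ** z).
Proof. by case: Halt => mZDl _ _ _; rewrite -[a *: x]addr0 mZDl amul0l addr0. Qed.
Lemma amulZr a x z : z ** (a *: x) = a *: (z ** x).
Proof. by case: Halt => _ mZDr _ _; rewrite -[a *: x]addr0 mZDr amul0r addr0. Qed.
Lemma amulNl x z : (- x) ** z = - (x ** z).
Proof. by rewrite -scaleN1r amulZl scaleN1r. Qed.
Lemma amulNr x z : z ** (- x) = - (z ** x).
Proof. by rewrite -scaleN1r amulZr scaleN1r. Qed.

Lemma assoc_alt_left x y : assoc d x x y = 0. Proof. by case: Halt. Qed.
Lemma assoc_alt_right x y : assoc d y x x = 0. Proof. by case: Halt. Qed.

Local Ltac assoc_expand :=
  rewrite /assoc ?(amulDl, amulDr, amulNl, amulNr, amulZl, amulZr, amul0l, amul0r).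

Lemma assoc_skewl u v w : assoc d u v w + assoc d v u w = 0.
Proof.
have -> : assoc d u v w + assoc d v u w =
  assoc d (u + v) (u + v) w - assoc d u u w - assoc d v v w by assoc_expand; lin_ring.
by rewrite !assoc_alt_left !subr0.
Qed.

Lemma assoc_skewr u v w : assoc d u v w + assoc d u w v = 0.
Proof.
have -> : assoc d u v w + assoc d u w v =
  assoc d u (v + w) (v + w) - assoc d u v v - assoc d u w w by assoc_expand; lin_ring.
by rewrite !assoc_alt_right !subr0.
Qed.

Lemma assoc_flex x y : assoc d x y x = 0.
Proof. by have := assoc_skewl x y x; rewrite assoc_alt_right addr0. Qed.

Lemma moufang_left x y z : x ** (y ** (x ** z)) = ((x ** y) ** x) ** z.
Proof.
(* Twice the defect is a combination of associators that vanish by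
   (linearised) alternativity. *)
apply/subr0_eq/double_inj; rewrite addr0; set defect := _ - _.
have -> : defect + defect =
  assoc d x x (y ** z) - (assoc d x y (x ** z) + assoc d y x (x ** z))
  - (assoc d x (y ** x) z + assoc d (y ** x) x z)
  - (assoc d x (x ** y) z + assoc d (x ** y) x z)
  + (assoc d y (x ** x) z + assoc d (x ** x) y z)
  + (assoc d y x x - assoc d x x y - assoc d x y x) ** z
  + y ** assoc d x x z - x ** (assoc d x y z + assoc d y x z).
  by rewrite /defect; assoc_expand; lin_ring.
rewrite !(assoc_alt_left, assoc_alt_right, assoc_flex, assoc_skewl).
by rewrite !(subr0, addr0, amul0l, amul0r).
Qed.

End Alternative.

Section UnitalAlternative.
Variables (R : realType) (A : vectType R) (d : alg_data A).
Hypotheses (Halt : alternative d) (Hunit : unital d).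
Local Notation "x ** y" := (amul d x y) (at level 40, left associativity).
Local Notation "1a" := (aone d).

Lemma moufang_right x y z : ((z ** x) ** y) ** x = z ** ((x ** y) ** x).
Proof.
have := moufang_left (alternative_opp Halt) x y z; rewrite /= => ->.
by have := assoc_flex Halt x y; rewrite /assoc => /subr0_eq ->.
Qed.

Lemma amul1l x : 1a ** x = x. Proof. by have [] := Hunit x. Qed.
Lemma amul1r x : x ** 1a = x. Proof. by have [] := Hunit x. Qed.

Lemma amulrK a b z : a ** b = 1a -> b ** a = 1a -> (z ** a) ** b = z.
Proof.
(* u |-> (u a) b and u |-> (u b) a are idempotent by the right Moufang
   identity and add up to 2 by right alternativity. *)
move=> ab1 ba1.
apply: (@idempotents_sum2_id _ _ (fun u => (u ** a) ** b) (fun u => (u ** b) ** a)).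
- by move=> u v; rewrite !(amulDl Halt).
- by move=> u; rewrite moufang_right ba1 amul1l.
- by move=> u; rewrite moufang_right ab1 amul1l.
- move=> u; have := assoc_skewr Halt u a b.
  by rewrite /assoc ab1 ba1 amul1r addrACA -opprD => /subr0_eq.
Qed.

End UnitalAlternative.

Section Inverses.
Variables (R : realType) (A : vectType R) (d : alg_data A).
Hypotheses (Halt : alternative d) (Hunit : unital d).
Local Notation "x ** y" := (amul d x y) (at level 40, left associativity).
Local Notation "1a" := (aone d).

Lemma amulKr a b z : a ** b = 1a -> b ** a = 1a -> b ** (a ** z) = z.
Proof. by move=> ab1 ba1; apply: (amulrK (alternative_opp Halt) (unital_opp Hunit)). Qed.

Lemma ainvP a : invertible d a -> a ** ainv d a = 1a /\ ainv d a ** a = 1a.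
Proof. exact: xgetPex. Qed.

Lemma ainv_eq a b : a ** b = 1a -> b ** a = 1a -> ainv d a = b.
Proof.
move=> ab1 ba1; have [aa' a'a] := ainvP (ex_intro _ b (conj ab1 ba1)).
by rewrite -(amulKr b aa' a'a) ab1 (amul1r Hunit).
Qed.

Lemma invertibleZ (k : R) b : k != 0 -> invertible d (k *: b) -> invertible d b.
Proof.
move=> k0 [b' [bb' b'b]]; exists (k *: b').
by split; [rewrite (amulZr Halt) -(amulZl Halt) | rewrite (amulZl Halt) -(amulZr Halt)].
Qed.

Lemma amul_imag_twistl I b c e : invertible d b -> I ** I = - 1a ->
  b ** c = (I ** b) ** e -> (I ** b) ** c = - (b ** e).
Proof.
move=> [b' [bb' b'b]] II1 bcE.
have -> : c = b' ** ((I ** b) ** e) by rewrite -bcE (amulKr _ bb' b'b).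
rewrite (moufang_left Halt) (amulrK Halt Hunit _ bb' b'b).
have := assoc_alt_left Halt I b; rewrite /assoc II1 (amulNl Halt) (amul1l Hunit).
by move/subr0_eq => <-; rewrite (amulNl Halt).
Qed.

Lemma amul_imag_twistr I a b e : invertible d e -> I ** I = - 1a ->
  a ** e = b ** (I ** e) -> a ** (I ** e) = - (b ** e).
Proof.
move=> [e' [ee' e'e]] II1 aeE.
have -> : a = (b ** (I ** e)) ** e' by rewrite -aeE (amulrK Halt Hunit _ ee' e'e).
rewrite (moufang_right Halt) (amulrK Halt Hunit _ ee' e'e).
have := assoc_alt_left Halt I e; rewrite /assoc II1 (amulNl Halt) (amul1l Hunit).
by move/subr0_eq => <-; rewrite (amulNr Halt).
Qed.

End Inverses.

Lemma alt_star_alternative (R : realType) (A : vectType R) (d : alg_data A) :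
  is_alt_star_alg d -> alternative d.
Proof. by case=> mZDl [mZDr [_ [_ [alt _]]]]; split=> // x y; have [? []] := alt x y. Qed.

Lemma alt_star_unital (R : realType) (A : vectType R) (d : alg_data A) :
  is_alt_star_alg d -> unital d.
Proof. by case=> _ [_ []]. Qed.

Section StarAlgebra.
Variables (R : realType) (A : vectType R) (d : alg_data A).
Hypothesis Hd : is_alt_star_alg d.
Let Halt := alt_star_alternative Hd.
Let Hunit := alt_star_unital Hd.
Local Notation "x ** y" := (amul d x y) (at level 40, left associativity).
Local Notation "1a" := (aone d).
Local Notation "x ^c" := (aconj d x).

Local Ltac amul_expand :=
  rewrite ?(amulDl Halt, amulDr Halt, amulNl Halt, amulNr Halt, amulZl Halt, amulZr Halt,
            amul0l Halt, amul0r Halt, amul1l Hunit, amul1r Hunit).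

Lemma aone_neq0 : 1a != 0. Proof. by case: Hd => _ [_ [_ []]]. Qed.

Lemma scale_aone_inj (a b : R) : a *: 1a = b *: 1a -> a = b.
Proof.
move/eqP; rewrite -subr_eq0 -scalerBl scaler_eq0 (negbTE aone_neq0) orbF.
by rewrite subr_eq0 => /eqP.
Qed.

Lemma aconjZD (a : R) x y : (a *: x + y)^c = a *: x^c + y^c.
Proof. by case: Hd => _ [_ [_ [_ [_ []]]]]. Qed.
Lemma aconjD x y : (x + y)^c = x^c + y^c.
Proof. by rewrite -[x in LHS]scale1r aconjZD scale1r. Qed.
Lemma aconj0 : (0 : A)^c = 0.
Proof. by apply: (addrI 0^c); rewrite -aconjD !addr0. Qed.
Lemma aconjZ (a : R) x : (a *: x)^c = a *: x^c.
Proof. by rewrite -[a *: x]addr0 aconjZD aconj0 addr0. Qed.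
Lemma aconjN x : (- x)^c = - x^c.
Proof. by rewrite -scaleN1r aconjZ scaleN1r. Qed.
Lemma aconj1 : 1a^c = 1a.
Proof. by case: Hd => _ [_ [_ [_ [_ [_ [_ [_ h]]]]]]]; have := h 1; rewrite !scale1r. Qed.

Section ImaginaryUnit.
Variable J : A.
Hypothesis hJ : imag_units d J.

Lemma imag_unit_conj : J^c = - J.
Proof. by apply/eqP; rewrite -addr_eq0 addrC; apply/eqP; case: hJ. Qed.

Lemma imag_unit_sqr : J ** J = - 1a.
Proof. by case: hJ => _; rewrite /anorm imag_unit_conj (amulNr Halt) => <-; rewrite opprK. Qed.

Lemma imag_unit_mulK v : J ** (J ** v) = - v.
Proof.
have := assoc_alt_left Halt J v.
by rewrite /assoc imag_unit_sqr (amulNl Halt) (amul1l Hunit) => /subr0_eq <-.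
Qed.

Lemma imag_unitN : imag_units d (- J).
Proof.
split; first by rewrite /trace aconjN imag_unit_conj opprK addNr.
rewrite /anorm aconjN imag_unit_conj opprK (amulNl Halt) -(amulNr Halt).
by rewrite -imag_unit_conj; case: hJ.
Qed.

Lemma imag_unit_neq0 : J != 0.
Proof.
apply: contraNneq aone_neq0 => J0.
by rewrite -oppr_eq0 -imag_unit_sqr J0 (amul0l Halt).
Qed.

End ImaginaryUnit.

Definition slice_pt (al be : R) (K : A) : A := al *: 1a + be *: K.

Lemma aconj_pt al be K : imag_units d K -> (slice_pt al be K)^c = slice_pt al be (- K).
Proof. by move=> hK; rewrite /slice_pt aconjD !aconjZ aconj1 imag_unit_conj. Qed.

Lemma re_pt al be K : imag_units d K -> re d (slice_pt al be K) = al *: 1a.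
Proof. by move=> hK; rewrite /re /trace aconj_pt // /slice_pt; lin_ring. Qed.

Lemma im_pt al be K : imag_units d K -> im d (slice_pt al be K) = be *: K.
Proof. by move=> hK; rewrite /im re_pt // /slice_pt; lin_ring. Qed.

Lemma anorm_pt al be K : imag_units d K ->
  anorm d (slice_pt al be K) = (al ^+ 2 + be ^+ 2) *: 1a.
Proof.
by move=> hK; rewrite /anorm aconj_pt // /slice_pt; amul_expand; rewrite imag_unit_sqr //; lin_ring.
Qed.

Lemma im_real (r : R) : im d (r *: 1a) = 0.
Proof. by rewrite /im /re /trace aconjZ aconj1; lin_ring. Qed.

Lemma real_ptE al be J : imag_units d J -> is_real d (slice_pt al be J) <-> be = 0.
Proof.
move=> hJ; split=> [[r xE]|->]; last by exists al; rewrite /slice_pt scale0r addr0.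
have /eqP : be *: J = 0 by rewrite -(im_pt al be hJ) xE im_real.
by rewrite scaler_eq0 (negbTE (imag_unit_neq0 hJ)) orbF => /eqP.
Qed.

Lemma slice_pt_eq al be J al' be' J' : imag_units d J -> imag_units d J' ->
  slice_pt al be J = slice_pt al' be' J' -> al' = al /\ (be' = be \/ be' = - be).
Proof.
move=> hJ hJ' xE; split.
  by apply: scale_aone_inj; rewrite -(re_pt al' be' hJ') -xE re_pt.
have sqrE k K : imag_units d K -> (k *: K) ** (k *: K) = - (k ^+ 2 *: 1a).
  by move=> hK; amul_expand; rewrite imag_unit_sqr //; lin_ring.
have imE : be' *: J' = be *: J by rewrite -(im_pt al' be' hJ') -xE im_pt.
have := sqrE be' J' hJ'; rewrite imE sqrE // => /oppr_inj/scale_aone_inj/eqP.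
by rewrite eq_sym eqf_sqr => /orP[] /eqP; [left | right].
Qed.

Lemma mem_sphere_pt al be J K : imag_units d J -> imag_units d K ->
  sphere d (slice_pt al be J) (slice_pt al be K).
Proof. by move=> hJ hK; exists al, be, J, K. Qed.

Lemma sphere_ptP al be J w : imag_units d J ->
  sphere d (slice_pt al be J) w <-> exists2 K, imag_units d K & w = slice_pt al be K.
Proof.
move=> hJ; split=> [[al' [be' [J' [I [hJ' [hI [xE ->]]]]]]] | [K hK ->]]; last first.
  exact: mem_sphere_pt.
have [-> [-> | ->]] := slice_pt_eq hJ hJ' xE; first by exists I.
by exists (- I); [exact: imag_unitN | rewrite /slice_pt scaleNr scalerN].
Qed.

Lemma circ_set_pt D al be K : D (al, be) -> imag_units d K -> circ_set d D (slice_pt al be K).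
Proof. by move=> hD hK; exists al, be, K. Qed.

Lemma ainv_scale_unit (be : R) J : be != 0 -> imag_units d J -> ainv d (be *: J) = (- be^-1) *: J.
Proof.
by move=> be0 hJ; apply: (ainv_eq Halt Hunit); amul_expand; rewrite imag_unit_sqr //; lin_ring.
Qed.

Section SliceFunction.
Variables (D : set (R * R)) (H1 H2 : R -> R -> A) (h : A -> A).
Hypothesis Hh : induced d D H1 H2 h.
Variables (al be : R) (J : A).
Hypotheses (hD : D (al, be)) (hJ : imag_units d J) (be0 : be != 0).
Local Notation x := (slice_pt al be J).

Lemma induced_pt K : imag_units d K -> h (slice_pt al be K) = H1 al be + K ** H2 al be.
Proof. exact: Hh. Qed.

Lemma sph_val_pt : sph_val d h x = H1 al be.
Proof.
rewrite /sph_val aconj_pt // !induced_pt //; last exact: imag_unitN.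
by rewrite (amulNl Halt); lin_ring.
Qed.

Lemma sph_der_pt : sph_der d h x = be^-1 *: H2 al be.
Proof.
rewrite /sph_der aconj_pt // !induced_pt ?im_pt ?ainv_scale_unit //; last exact: imag_unitN.
by amul_expand; rewrite !imag_unit_mulK //; lin_ring.
Qed.

Lemma sphere_zeros_stem0 :
  sphere d x `<=` zeros (circ_set d D) h -> H1 al be = 0 /\ H2 al be = 0.
Proof.
move=> Sx0.
have [_] := Sx0 _ (mem_sphere_pt al be hJ hJ).
have [_] := Sx0 _ (mem_sphere_pt al be hJ (imag_unitN hJ)).
rewrite !induced_pt //; last exact: imag_unitN.
rewrite (amulNl Halt) => H1JN H1J.
have /double_inj H1_0 : H1 al be + H1 al be = 0 + 0.
  by rewrite -{1}H1JN -H1J addrACA addNr addr0.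
split=> //; apply: oppr_inj; rewrite oppr0 -(imag_unit_mulK hJ).
by move: H1J; rewrite H1_0 add0r => ->; rewrite (amul0r Halt).
Qed.

Lemma sphere_zero_stem y : sphere d x y -> zeros (circ_set d D) h y ->
  exists2 I, imag_units d I & y = slice_pt al be I /\ H1 al be = - (I ** H2 al be).
Proof.
move=> /(sphere_ptP _ _ _ hJ) [I hI ->] [_]; rewrite induced_pt // => /eqP.
by rewrite addr_eq0 => /eqP; exists I.
Qed.

Lemma sphere_zeros_unique : invertible d (sph_der d h x) ->
  sphere d x `&` zeros (circ_set d D) h `<=`
  [set (re d x ** sph_der d h x - sph_val d h x) ** ainv d (sph_der d h x)].
Proof.
move=> hinv w [Sw Vw]; have [I hI [-> H1E]] := sphere_zero_stem Sw Vw.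
have [hs1 h1s] := ainvP hinv.
rewrite /= -[LHS](amulrK Halt Hunit _ hs1 h1s); congr (_ ** _).
rewrite re_pt // sph_val_pt sph_der_pt H1E /slice_pt; amul_expand; lin_ring.
Qed.

End SliceFunction.

Lemma stem_real_im (D : set (R * R)) (H1 H2 : R -> R -> A) al :
  stem D H1 H2 -> D (al, 0) -> H2 al 0 = 0.
Proof.
move=> HH hD; have [_] := HH _ _ hD; rewrite oppr0 => H2N.
by apply: double_inj; rewrite addr0 {1}H2N addNr.
Qed.

Section SliceProduct.
Variables (D : set (R * R)) (F1 F2 G1 G2 : R -> R -> A) (f g fg : A -> A).
Hypotheses (Hf : induced d D F1 F2 f) (Hg : induced d D G1 G2 g)
  (Hfg : induced d D (stem_prod1 d F1 F2 G1 G2) (stem_prod2 d F1 F2 G1 G2) fg).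
Local Notation V := (zeros (circ_set d D)).

Lemma prod_zero_real x : stem D F1 F2 -> stem D G1 G2 ->
  circ_set d D x -> is_real d x -> V f x \/ V g x -> V fg x.
Proof.
move=> HF HG [al [be [J [hD [hJ ->]]]]]; rewrite -/(slice_pt al be J).
move=> /(real_ptE _ _ hJ) be0; subst be.
have F20 := stem_real_im HF hD; have G20 := stem_real_im HG hD.
have fgE : fg (slice_pt al 0 J) = F1 al 0 ** G1 al 0.
  rewrite (induced_pt Hfg) // /stem_prod1 /stem_prod2 F20 G20.
  by rewrite !(amul0l Halt, amul0r Halt, subr0, addr0).
move=> Vx; split; first exact: circ_set_pt.
rewrite fgE; case: Vx => -[_].
  by rewrite (induced_pt Hf) // F20 (amul0r Halt) addr0 => ->; rewrite (amul0l Halt).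
by rewrite (induced_pt Hg) // G20 (amul0r Halt) addr0 => ->; rewrite (amul0r Halt).
Qed.

Section NonrealPoint.
Variables (al be : R) (J : A).
Hypotheses (hD : D (al, be)) (hJ : imag_units d J) (be0 : be != 0).
Local Notation x := (slice_pt al be J).
Local Notation Sx := (sphere d x).
Local Notation a := (F1 al be).
Local Notation b := (F2 al be).
Local Notation c := (G1 al be).
Local Notation e := (G2 al be).
Local Notation fo := (sph_val d f x).
Local Notation go := (sph_val d g x).
Local Notation fs := (sph_der d f x).
Local Notation gs := (sph_der d g x).
Local Notation hs := (sph_der d fg x).

Lemma prod_sphere_zeros_stem : a ** c - b ** e = 0 -> a ** e + b ** c = 0 -> Sx `<=` V fg.
Proof.
move=> h1 h2 w /(sphere_ptP _ _ _ hJ) [K hK ->]; split; first exact: circ_set_pt.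
by rewrite (induced_pt Hfg) // /stem_prod1 /stem_prod2 h1 h2 (amul0r Halt) addr0.
Qed.

Lemma prod_sphere_zeros : Sx `<=` V f \/ Sx `<=` V g -> Sx `<=` V fg.
Proof.
case=> [/(sphere_zeros_stem0 Hf hD hJ) | /(sphere_zeros_stem0 Hg hD hJ)] [H1_0 H2_0];
  by apply: prod_sphere_zeros_stem; rewrite H1_0 H2_0 !(amul0l Halt, amul0r Halt, subr0, addr0).
Qed.

Lemma prod_sph_der_zero_l y : Sx y -> V f y -> hs = fs ** go - (im d y ** fs) ** gs.
Proof.
move=> Sy Vy; have [I hI [-> aE]] := sphere_zero_stem Hf hD hJ Sy Vy.
rewrite im_pt // (sph_der_pt Hfg) // (sph_der_pt Hf) // (sph_der_pt Hg) // (sph_val_pt Hg) //.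
by rewrite /stem_prod2 aE; amul_expand; lin_ring.
Qed.

Lemma prod_sphere_zeros_l y : Sx y -> V f y -> invertible d fs -> hs = 0 -> Sx `<=` V fg.
Proof.
move=> Sy Vy; have [I hI [_ aE]] := sphere_zero_stem Hf hD hJ Sy Vy.
rewrite (sph_der_pt Hf) // (sph_der_pt Hfg) // => /(invertibleZ Halt (invr_neq0 be0)) b_inv.
move/eqP; rewrite scaler_eq0 invr_eq0 (negbTE be0) /= /stem_prod2 aE (amulNl Halt).
rewrite addrC subr_eq0 => /eqP bcE.
apply: prod_sphere_zeros_stem; rewrite aE (amulNl Halt) ?bcE ?addNr //.
by rewrite (amul_imag_twistl Halt Hunit b_inv (imag_unit_sqr hI) bcE) opprK subrr.
Qed.

Lemma prod_zeros_l y : Sx y -> V f y -> invertible d hs ->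
  Sx `&` V fg `<=` [set ((y ** fs) ** go - ((y ** im d y) ** fs) ** gs) ** ainv d hs].
Proof.
move=> Sy Vy hs_inv; have [I hI [yE aE]] := sphere_zero_stem Hf hD hJ Sy Vy.
suff -> : (y ** fs) ** go - ((y ** im d y) ** fs) ** gs = re d x ** hs - sph_val d fg x.
  exact: (sphere_zeros_unique Hfg).
rewrite yE re_pt // im_pt // (sph_val_pt Hfg) // (sph_der_pt Hfg) // (sph_der_pt Hf) //.
rewrite (sph_der_pt Hg) // (sph_val_pt Hg) // /stem_prod1 /stem_prod2 aE /slice_pt.
by amul_expand; rewrite (imag_unit_sqr hI); amul_expand; lin_ring.
Qed.

Lemma prod_sph_der_zero_r z : Sx z -> V g z -> hs = fo ** gs - fs ** (im d z ** gs).
Proof.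
move=> Sz Vz; have [I hI [-> cE]] := sphere_zero_stem Hg hD hJ Sz Vz.
rewrite im_pt // (sph_der_pt Hfg) // (sph_der_pt Hf) // (sph_der_pt Hg) // (sph_val_pt Hf) //.
by rewrite /stem_prod2 cE; amul_expand; lin_ring.
Qed.

Lemma prod_sphere_zeros_r z : Sx z -> V g z -> invertible d gs -> hs = 0 -> Sx `<=` V fg.
Proof.
move=> Sz Vz; have [I hI [_ cE]] := sphere_zero_stem Hg hD hJ Sz Vz.
rewrite (sph_der_pt Hg) // (sph_der_pt Hfg) // => /(invertibleZ Halt (invr_neq0 be0)) e_inv.
move/eqP; rewrite scaler_eq0 invr_eq0 (negbTE be0) /= /stem_prod2 cE (amulNr Halt).
rewrite subr_eq0 => /eqP aeE.
apply: prod_sphere_zeros_stem; rewrite cE (amulNr Halt) ?aeE ?subrr //.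
by rewrite (amul_imag_twistr Halt Hunit e_inv (imag_unit_sqr hI) aeE) opprK subrr.
Qed.

Lemma prod_zeros_r z : Sx z -> V g z -> invertible d hs ->
  Sx `&` V fg `<=` [set (fo ** (z ** gs) - fs ** ((z ** im d z) ** gs)) ** ainv d hs].
Proof.
move=> Sz Vz hs_inv; have [I hI [zE cE]] := sphere_zero_stem Hg hD hJ Sz Vz.
suff -> : fo ** (z ** gs) - fs ** ((z ** im d z) ** gs) = re d x ** hs - sph_val d fg x.
  exact: (sphere_zeros_unique Hfg).
rewrite zE re_pt // im_pt // (sph_val_pt Hfg) // (sph_der_pt Hfg) // (sph_der_pt Hf) //.
rewrite (sph_der_pt Hg) // (sph_val_pt Hf) // /stem_prod1 /stem_prod2 cE /slice_pt.
by amul_expand; rewrite (imag_unit_sqr hI); amul_expand; lin_ring.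
Qed.

Lemma prod_sph_der_zero_lr y z : Sx y -> Sx z -> V f y -> V g z ->
  hs = (y^c ** fs) ** gs - fs ** (z ** gs).
Proof.
move=> Sy Sz Vy Vz.
have [I hI [-> aE]] := sphere_zero_stem Hf hD hJ Sy Vy.
have [I' hI' [-> cE]] := sphere_zero_stem Hg hD hJ Sz Vz.
rewrite aconj_pt // (sph_der_pt Hfg) // (sph_der_pt Hf) // (sph_der_pt Hg) //.
by rewrite /stem_prod2 aE cE /slice_pt; amul_expand; lin_ring.
Qed.

Lemma prod_zeros_lr y z : Sx y -> Sx z -> V f y -> V g z -> invertible d hs ->
  Sx `&` V fg `<=` [set ((anorm d x ** fs) ** gs - (y ** fs) ** (z ** gs)) ** ainv d hs].
Proof.
move=> Sy Sz Vy Vz hs_inv.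
have [I hI [yE aE]] := sphere_zero_stem Hf hD hJ Sy Vy.
have [I' hI' [zE cE]] := sphere_zero_stem Hg hD hJ Sz Vz.
suff -> : (anorm d x ** fs) ** gs - (y ** fs) ** (z ** gs) = re d x ** hs - sph_val d fg x.
  exact: (sphere_zeros_unique Hfg).
rewrite yE zE anorm_pt // re_pt // (sph_val_pt Hfg) // (sph_der_pt Hfg) // (sph_der_pt Hf) //.
rewrite (sph_der_pt Hg) // /stem_prod1 /stem_prod2 aE cE /slice_pt.
by amul_expand; lin_ring.
Qed.

End NonrealPoint.
End SliceProduct.

End StarAlgebra.

Theorem theorem5p1 (R : realType) (A : vectType R) (d : alg_data A)
  (Hd : is_alt_star_alg d) (HS : exists J : A, imag_units d J)
  (D : set (R * R)) (HDne : D !=set0)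
  (HD : forall al be : R, D (al, be) -> D (al, - be))
  (F1 F2 G1 G2 : R -> R -> A)
  (HF : stem D F1 F2) (HG : stem D G1 G2)
  (f g fg : A -> A)
  (Hf : induced d D F1 F2 f) (Hg : induced d D G1 G2 g)
  (Hfg : induced d D (stem_prod1 d F1 F2 G1 G2) (stem_prod2 d F1 F2 G1 G2) fg) :
  let mul := amul d in
  let Om := circ_set d D in
  let V := zeros Om in
  (forall x : A, Om x -> is_real d x -> (V f x \/ V g x) -> V fg x) /\
  (forall x : A, Om x -> ~ is_real d x ->
    let Sx := sphere d x in
    let fs := sph_der d f x in
    let gs := sph_der d g x in
    let fo := sph_val d f x in
    let go := sph_val d g x in
    let hs := sph_der d fg x in
    (* (1) *)
    ((Sx `<=` V f \/ Sx `<=` V g) -> Sx `<=` V fg) /\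
    (* (2) *)
    (forall y : A, Sx y -> V f y ->
      hs = mul fs go - mul (mul (im d y) fs) gs /\
      (invertible d fs -> hs = 0 -> Sx `<=` V fg) /\
      (invertible d hs ->
        Sx `&` V fg `<=`
        [set mul (mul (mul y fs) go - mul (mul (mul y (im d y)) fs) gs) (ainv d hs)])) /\
    (* (3) *)
    (forall z : A, Sx z -> V g z ->
      hs = mul fo gs - mul fs (mul (im d z) gs) /\
      (invertible d gs -> hs = 0 -> Sx `<=` V fg) /\
      (invertible d hs ->
        Sx `&` V fg `<=`
        [set mul (mul fo (mul z gs) - mul fs (mul (mul z (im d z)) gs)) (ainv d hs)])) /\
    (* (4) *)
    (forall y z : A, Sx y -> Sx z -> V f y -> V g z ->
      hs = mul (mul (aconj d y) fs) gs - mul fs (mul z gs) /\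
      ((invertible d fs \/ invertible d gs) -> hs = 0 -> Sx `<=` V fg) /\
      (invertible d hs ->
        Sx `&` V fg `<=`
        [set mul (mul (mul (anorm d x) fs) gs - mul (mul y fs) (mul z gs)) (ainv d hs)]))).
Proof.
move=> mul Om V; split=> [x|]; first exact: (prod_zero_real Hd Hf Hg Hfg HF HG).
move=> _ [al [be [J [hD [hJ ->]]]]] not_real.
have be0 : be != 0 by apply: contra_notN not_real => /eqP /(real_ptE Hd al be hJ).
move=> Sx fs gs fo go hs.
have zeros_l := prod_sphere_zeros_l Hd Hf Hfg hD hJ be0.
have zeros_r := prod_sphere_zeros_r Hd Hg Hfg hD hJ be0.
split; first exact: (prod_sphere_zeros Hd Hf Hg Hfg hD hJ).
split.
  move=> y Sy Vy; split; first exact: (prod_sph_der_zero_l Hd Hf Hg Hfg hD hJ be0).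
  by split; [exact: zeros_l Sy Vy | exact: (prod_zeros_l Hd Hf Hg Hfg hD hJ be0)].
split.
  move=> z Sz Vz; split; first exact: (prod_sph_der_zero_r Hd Hf Hg Hfg hD hJ be0).
  by split; [exact: zeros_r Sz Vz | exact: (prod_zeros_r Hd Hf Hg Hfg hD hJ be0)].
move=> y z Sy Sz Vy Vz; split; first exact: (prod_sph_der_zero_lr Hd Hf Hg Hfg hD hJ be0).
split; last exact: (prod_zeros_lr Hd Hf Hg Hfg hD hJ be0).
by case=> [/(zeros_l _ Sy Vy) | /(zeros_r _ Sz Vz)].
Qed.
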